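(* Let $\beta>1$, $l\in(-1,0]$, $r=l+1$, let $T$ be the $(-\beta,l)$-transformation and $d$ the $(-\beta,l)$-expansion, and put $d^*(l)=\lim_{\varepsilon\to0+}d(l+\varepsilon)$ and $d^*(r)=\lim_{\varepsilon\to0+}d(r-\varepsilon)$. If $T^q(l)\neq l$ for all $q\in\mathbb{N}$, or if the equality $T^q(l)=l$ holds only for even $q\in\mathbb{N}$, then $d^*(l)=d(l)$. If on the other hand $T^q(l)=l$ for some odd $q\in\mathbb{N}$, so that $d(l)=(l_1l_2\cdots l_{q-1}l_q)^\omega$, then $$d^*(l)=l_1l_2\cdots l_{q-1}(l_q-1)\,d^*(r).$$
   Context: For $\beta>1$ and $l\in(-1,0]$, $r=l+1$, the $(-\beta,l)$-transformation is $T:[l,r)\to[l,r)$, $T(x)=-\beta x-\lfloor -\beta x-l\rfloor$. The $(-\beta,l)$-expansion of $x\in[l,r)$ is the integer sequence $d(x)=x_1x_2x_3\cdots$ with $x_i=\lfloor -\beta T^{i-1}(x)-l\rfloor$. Limits of sequences are in the product topology (digits lie in a finite set); these one-sided limits exist. $w^\omega$ is the infinite repetition of the word $w$; juxtaposition denotes concatenation. *)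

From Stdlib Require Import Reals ZArith Arith Lia Lra.
Open Scope R_scope.

(* floor on R: Int_part r = up r - 1, where up r is the unique integer
   with r < up r <= r + 1; hence Int_part r = floor r. *)
Definition floorR (x : R) : Z := Int_part x.

Definition Tmap (beta l : R) (x : R) : R :=
  - beta * x - IZR (floorR (- beta * x - l)).

Definition Titer (beta l : R) (n : nat) (x : R) : R :=
  Nat.iter n (Tmap beta l) x.

(* (-beta,l)-expansion, 0-indexed: dexp beta l x n = x_{n+1}
   = floor(-beta T^n(x) - l). *)
Definition dexp (beta l : R) (x : R) (n : nat) : Z :=
  floorR (- beta * Titer beta l n x - l).

(* Limit in the product topology (digits in a finite/discrete set):
   s = lim_{eps -> 0+} d(x0 + eps)  iff every coordinate is eventually
   equal to the corresponding coordinate of s. *)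
Definition is_right_lim_d (beta l x0 : R) (s : nat -> Z) : Prop :=
  forall n : nat, exists delta : R, 0 < delta /\
    forall eps : R, 0 < eps < delta -> dexp beta l (x0 + eps) n = s n.

Definition is_left_lim_d (beta l x0 : R) (s : nat -> Z) : Prop :=
  forall n : nat, exists delta : R, 0 < delta /\
    forall eps : R, 0 < eps < delta -> dexp beta l (x0 - eps) n = s n.

From Stdlib Require Import Reals ZArith Arith Lia Lra.
Open Scope R_scope.

(* Follow a point approaching [w] from one side.  Since [T] multiplies by
   [-beta], [T (w + e) = T w - beta e] and [T (w - e) = T w + beta e] as long
   as the digit does not change, so the side flips at every step.  Approaching
   from the left the digit never changes; approaching from the right it drops
   by one exactly when [T w = l], and then [T (w + e) = r - beta e].  Thus
   [d*(x)] is read off an orbit of one-sided points.  Starting at [l] from the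
   right, after [n] steps we sit at [T^n l], on the right iff [n] is even, so a
   drop occurs iff [T^q l = l] for some odd [q]; after it we continue as the
   left approach of [r], i.e. with [d*(r)]. *)

Lemma floor_unique (y : R) (k : Z) :
  IZR k <= y < IZR k + 1 -> floorR y = k.
Proof.
  intros [Hk Hk1]. unfold floorR. destruct (base_Int_part y) as [B1 B2].
  assert (A1 : IZR k < IZR (Int_part y + 1)) by (rewrite plus_IZR; lra).
  assert (A2 : IZR (Int_part y) < IZR (k + 1)) by (rewrite plus_IZR; lra).
  apply lt_IZR in A1. apply lt_IZR in A2. lia.
Qed.

Definition near0 (P : R -> Prop) : Prop :=
  exists d, 0 < d /\ forall e, 0 < e < d -> P e.

Lemma near0_and (P Q : R -> Prop) :
  near0 P -> near0 Q -> near0 (fun e => P e /\ Q e).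
Proof.
  intros [d1 [Hd1 HP]] [d2 [Hd2 HQ]]. exists (Rmin d1 d2). split.
  - now apply Rmin_pos.
  - intros e He. pose proof (Rmin_l d1 d2). pose proof (Rmin_r d1 d2).
    split; [apply HP | apply HQ]; lra.
Qed.

Lemma near0_impl (P Q : R -> Prop) :
  (forall e, 0 < e -> P e -> Q e) -> near0 P -> near0 Q.
Proof.
  intros PQ [d [Hd HP]]. exists d. split; [exact Hd|].
  intros e He. apply PQ, HP; lra.
Qed.

Lemma near0_scale (c : R) (P : R -> Prop) :
  0 < c -> near0 P -> near0 (fun e => P (c * e)).
Proof.
  intros Hc [d [Hd HP]]. exists (d / c). split.
  - now apply Rdiv_lt_0_compat.
  - intros e [He1 He2]. apply HP. split.
    + now apply Rmult_lt_0_compat.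
    + apply Rmult_lt_compat_l with (r := c) in He2; [|exact Hc].
      replace (c * (d / c)) with d in He2 by (field; lra). exact He2.
Qed.

Lemma near0_lt (c : R) : 0 < c -> near0 (fun e => e < c).
Proof. intros Hc. exists c. split; [exact Hc | intros e He; lra]. Qed.

Section OneSidedOrbit.

Variables beta l : R.
Hypothesis beta_gt0 : 0 < beta.

(* A one-sided point [(w, true)] stands for [w + e], [(w, false)] for [w - e],
   with [e -> 0+]. *)
Definition approach (p : R * bool) (e : R) : R :=
  if snd p then fst p + e else fst p - e.

Definition limit_digit (p : R * bool) : Z :=
  let (w, right) := p in
  if right then
    if Req_EM_T (Tmap beta l w) l then (floorR (- beta * w - l) - 1)%Z
    else floorR (- beta * w - l)
  else floorR (- beta * w - l).

Definition limit_next (p : R * bool) : R * bool :=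
  let (w, right) := p in
  if right then
    if Req_EM_T (Tmap beta l w) l then (l + 1, false) else (Tmap beta l w, false)
  else (Tmap beta l w, true).

Definition limit_orbit (n : nat) (p : R * bool) : R * bool :=
  Nat.iter n limit_next p.

Lemma floor_approach (p : R * bool) :
  near0 (fun e => floorR (- beta * approach p e - l) = limit_digit p).
Proof.
  destruct p as [w right]. unfold approach, limit_digit; simpl.
  destruct (base_Int_part (- beta * w - l)) as [B1 B2].
  fold (floorR (- beta * w - l)) in B1, B2.
  set (k := floorR (- beta * w - l)) in *.
  destruct right.
  - destruct (Req_EM_T (Tmap beta l w) l) as [E|E].
    + unfold Tmap in E. fold k in E.
      apply (near0_impl (fun e => beta * e < 1)).
      { intros e He H. apply floor_unique. rewrite minus_IZR.
        pose proof (Rmult_lt_0_compat _ _ beta_gt0 He). lra. }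
      apply (near0_scale beta (fun e => e < 1)); [exact beta_gt0|].
      apply near0_lt; lra.
    + assert (Hlt : IZR k < - beta * w - l).
      { destruct B1 as [h|h]; [exact h|].
        exfalso. apply E. unfold Tmap. fold k. lra. }
      apply (near0_impl (fun e => beta * e < - beta * w - l - IZR k)).
      { intros e He H. apply floor_unique.
        pose proof (Rmult_lt_0_compat _ _ beta_gt0 He). lra. }
      apply (near0_scale beta (fun e => e < - beta * w - l - IZR k));
        [exact beta_gt0|].
      apply near0_lt; lra.
  - apply (near0_impl (fun e => beta * e < IZR k + 1 - (- beta * w - l))).
    { intros e He H. apply floor_unique.
      pose proof (Rmult_lt_0_compat _ _ beta_gt0 He). lra. }
    apply (near0_scale beta (fun e => e < IZR k + 1 - (- beta * w - l)));
      [exact beta_gt0|].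
    apply near0_lt; lra.
Qed.

Lemma Tmap_approach (p : R * bool) (e : R) :
  floorR (- beta * approach p e - l) = limit_digit p ->
  Tmap beta l (approach p e) = approach (limit_next p) (beta * e).
Proof.
  unfold Tmap. intros ->.
  destruct p as [w [|]]; unfold limit_digit, limit_next, approach; simpl.
  - destruct (Req_EM_T (Tmap beta l w) l) as [E|E]; unfold Tmap in *; simpl.
    + rewrite minus_IZR. lra.
    + lra.
  - unfold Tmap. lra.
Qed.

Lemma Titer_approach (n : nat) (p : R * bool) :
  near0 (fun e =>
    Titer beta l n (approach p e) = approach (limit_orbit n p) (beta ^ n * e)).
Proof.
  induction n as [|n IH].
  - exists 1. split; [lra|]. intros e _.
    destruct p as [w [|]]; unfold approach; simpl; ring.
  - assert (Hpow : 0 < beta ^ n) by now apply pow_lt.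
    refine (near0_impl _ _ _ (near0_and _ _ IH
      (near0_scale _ _ Hpow (floor_approach (limit_orbit n p))))).
    intros e _ [Hiter Hfloor]. simpl Titer. fold (Titer beta l n (approach p e)).
    rewrite Hiter, (Tmap_approach _ _ Hfloor). simpl. f_equal. ring.
Qed.

Lemma dexp_approach (n : nat) (p : R * bool) :
  near0 (fun e => dexp beta l (approach p e) n = limit_digit (limit_orbit n p)).
Proof.
  assert (Hpow : 0 < beta ^ n) by now apply pow_lt.
  refine (near0_impl _ _ _ (near0_and _ _ (Titer_approach n p)
    (near0_scale _ _ Hpow (floor_approach (limit_orbit n p))))).
  intros e _ [Hiter Hfloor]. unfold dexp. now rewrite Hiter.
Qed.

Lemma is_right_lim_d_orbit (x : R) :
  is_right_lim_d beta l x (fun n => limit_digit (limit_orbit n (x, true))).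
Proof. intros n. exact (dexp_approach n (x, true)). Qed.

Lemma is_left_lim_d_orbit (x : R) :
  is_left_lim_d beta l x (fun n => limit_digit (limit_orbit n (x, false))).
Proof. intros n. exact (dexp_approach n (x, false)). Qed.

Lemma limit_orbit_add (m n : nat) (p : R * bool) :
  limit_orbit (m + n) p = limit_orbit m (limit_orbit n p).
Proof. apply Nat.iter_add. Qed.

Definition drops_at (n : nat) : Prop :=
  Nat.even n = true /\ Titer beta l (S n) l = l.

Lemma limit_orbit_no_drop (N : nat) :
  (forall k, (k < N)%nat -> ~ drops_at k) ->
  forall n, (n <= N)%nat -> limit_orbit n (l, true) = (Titer beta l n l, Nat.even n).
Proof.
  intros Hnodrop n. induction n as [|n IH]; intros Hn; [reflexivity|].
  simpl limit_orbit. fold (limit_orbit n (l, true)). rewrite IH by lia.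
  unfold limit_next. rewrite Nat.even_succ, <- Nat.negb_even.
  destruct (Nat.even n) eqn:Hev; [|reflexivity].
  destruct (Req_EM_T (Tmap beta l (Titer beta l n l)) l) as [E|E]; [|reflexivity].
  exfalso. now apply (Hnodrop n).
Qed.

Lemma limit_digit_no_drop (n : nat) :
  ~ drops_at n -> limit_digit (Titer beta l n l, Nat.even n) = dexp beta l l n.
Proof.
  intros Hnodrop. unfold limit_digit. destruct (Nat.even n) eqn:Hev; [|reflexivity].
  destruct (Req_EM_T (Tmap beta l (Titer beta l n l)) l) as [E|E]; [|reflexivity].
  exfalso. now apply Hnodrop.
Qed.

Lemma is_right_lim_d_ext (x : R) (s t : nat -> Z) :
  is_right_lim_d beta l x s -> (forall n, s n = t n) -> is_right_lim_d beta l x t.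
Proof.
  intros Hs Hst n. refine (near0_impl _ _ _ (Hs n)). intros e _ H. congruence.
Qed.

Lemma right_lim_d_no_drop :
  (forall n, ~ drops_at n) -> is_right_lim_d beta l l (dexp beta l l).
Proof.
  intros Hnodrop. apply (is_right_lim_d_ext l _ _ (is_right_lim_d_orbit l)).
  intros n. rewrite (limit_orbit_no_drop n (fun k _ => Hnodrop k) n (le_n n)).
  apply limit_digit_no_drop, Hnodrop.
Qed.

Lemma right_lim_d_odd_period (q : nat) :
  Nat.Odd q -> Titer beta l q l = l ->
  (forall k, (1 <= k < q)%nat -> Titer beta l k l <> l) ->
  is_right_lim_d beta l l
    (fun n => if (n <? q - 1)%nat then dexp beta l l n
              else if (n =? q - 1)%nat then (dexp beta l l n - 1)%Z
              else limit_digit (limit_orbit (n - q) (l + 1, false))).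
Proof.
  intros [m Hm] Hper Hmin.
  assert (Hnodrop : forall k, (k < q - 1)%nat -> ~ drops_at k).
  { intros k Hk [_ E]. apply (Hmin (S k)); [lia | exact E]. }
  assert (Hdrop : Tmap beta l (Titer beta l (q - 1) l) = l).
  { change (Titer beta l (S (q - 1)) l = l). now replace (S (q - 1)) with q by lia. }
  assert (Hbefore : limit_orbit (q - 1) (l, true) = (Titer beta l (q - 1) l, true)).
  { rewrite (limit_orbit_no_drop _ Hnodrop _ (le_n _)).
    f_equal. apply Nat.even_spec. exists m. lia. }
  assert (Hafter : limit_orbit q (l, true) = (l + 1, false)).
  { replace q with (1 + (q - 1))%nat at 1 by lia.
    rewrite limit_orbit_add, Hbefore. simpl.
    now destruct (Req_EM_T (Tmap beta l (Titer beta l (q - 1) l)) l). }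
  apply (is_right_lim_d_ext l _ _ (is_right_lim_d_orbit l)). intros n.
  destruct (Nat.ltb_spec n (q - 1)) as [Hlt|Hge].
  - rewrite (limit_orbit_no_drop _ Hnodrop n ltac:(lia)).
    apply limit_digit_no_drop. intros [_ E]. apply (Hmin (S n)); [lia | exact E].
  - destruct (Nat.eqb_spec n (q - 1)) as [->|Hne].
    + rewrite Hbefore. unfold limit_digit, dexp.
      now destruct (Req_EM_T (Tmap beta l (Titer beta l (q - 1) l)) l).
    + replace n with ((n - q) + q)%nat at 1 by lia.
      now rewrite limit_orbit_add, Hafter.
Qed.

End OneSidedOrbit.

Theorem mainTheorem5 (beta l : R) (Hbeta : 1 < beta) (Hl : -1 < l <= 0) :
  (* Case 1: T^q(l) <> l for all q >= 1, or T^q(l) = l only for even q *)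
  ((forall q : nat, (1 <= q)%nat -> Titer beta l q l <> l) \/
   (forall q : nat, (1 <= q)%nat -> Titer beta l q l = l -> Nat.Even q) ->
   is_right_lim_d beta l l (dexp beta l l))
  /\
  (* Case 2: q is the (least) period of l, and q is odd:
     d*(l) = l_1 ... l_{q-1} (l_q - 1) d*(r) *)
  (forall q : nat, (1 <= q)%nat -> Nat.Odd q ->
   Titer beta l q l = l ->
   (forall k : nat, (1 <= k < q)%nat -> Titer beta l k l <> l) ->
   exists sr : nat -> Z,
     is_left_lim_d beta l (l + 1) sr /\
     is_right_lim_d beta l l
       (fun n => if (n <? q - 1)%nat then dexp beta l l n
                 else if (n =? q - 1)%nat then (dexp beta l l n - 1)%Z
                 else sr (n - q)%nat)).
Proof.
  assert (Hbeta0 : 0 < beta) by lra.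
  split.
  - intros Hcase. apply (right_lim_d_no_drop beta l Hbeta0).
    intros k [Hev E]. destruct Hcase as [Hnever|Heven].
    + exact (Hnever (S k) ltac:(lia) E).
    + destruct (Heven (S k) ltac:(lia) E) as [m Hm].
      apply Nat.even_spec in Hev as [m' Hm']. lia.
  - intros q _ Hodd Hper Hmin.
    exists (fun n => limit_digit beta l (limit_orbit beta l n (l + 1, false))).
    split.
    + exact (is_left_lim_d_orbit beta l Hbeta0 (l + 1)).
    + exact (right_lim_d_odd_period beta l Hbeta0 q Hodd Hper Hmin).
Qed.
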